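(* Let $\eta_1,\dots,\eta_n$ be admissible measures on $\mathbb R$. For each $i$ let $M_i(dx):=\cosh(x)\eta_i(dx)$ (a probability measure), let $X_i\sim M_i$ be independent and $U_i:=\tanh(X_i)$. Let $\bar U:=\tanh(\bar X)$ with $\bar X\sim\frac1n\sum_iM_i$, and let $\bar U_1,\dots,\bar U_n$ be i.i.d. copies of $\bar U$. Define $V:=\sum_{i=1}^nU_i^2$ and $\bar V:=\sum_{i=1}^n\bar U_i^2$. Then $\mathbb E\sqrt{\bar V}\le\mathbb E\sqrt V$.
   Context: A finitely supported positive measure $\eta$ on $\mathbb R$ is called admissible if $\int e^x\,\eta(dx)=\int e^{-x}\,\eta(dx)=1$. *)

From HB Require Import structures.
From mathcomp Require Import all_boot all_order all_algebra.
From mathcomp Require Import reals sequences exp.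
Set Implicit Arguments. Unset Strict Implicit. Unset Printing Implicit Defensive.
Import Order.TTheory GRing.Theory Num.Theory.
Local Open Scope ring_scope.

Definition cosh {R : realType} (x : R) : R := (expR x + expR (- x)) / 2.
Definition tanh {R : realType} (x : R) : R :=
  (expR x - expR (- x)) / (expR x + expR (- x)).

(* A finitely supported positive measure on R is encoded as a finite list of
   (atom, weight) pairs: eta = \sum_(p <- eta) p.2 * dirac p.1, weights >= 0. *)
Definition fsmeasure (R : realType) := seq (R * R).

Definition admissible {R : realType} (eta : fsmeasure R) : Prop :=
  [/\ all (fun p => 0 <= p.2) eta,
      \sum_(p <- eta) p.2 * expR p.1 = 1 &
      \sum_(p <- eta) p.2 * expR (- p.1) = 1].

Definition coshM {R : realType} (eta : fsmeasure R) : fsmeasure R :=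
  [seq (p.1, p.2 * cosh p.1) | p <- eta].

(* Expectation of g(X_1,...,X_k) for independent X_j with (finitely supported)
   laws mus_j:  \sum_{x_1} ... \sum_{x_k} mu_1{x_1} ... mu_k{x_k} g(x_1..x_k). *)
Fixpoint Eindep {R : realType} (mus : seq (fsmeasure R)) (g : seq R -> R) : R :=
  match mus with
  | [::] => g [::]
  | mu :: mus' => \sum_(p <- mu) p.2 * Eindep mus' (fun xs => g (p.1 :: xs))
  end.

Definition mixture {R : realType} (n : nat) (mus : seq (fsmeasure R)) : fsmeasure R :=
  [seq (p.1, p.2 / n%:R) | p <- flatten mus].

Definition sqrt_sum_tanh2 {R : realType} (xs : seq R) : R :=
  Num.sqrt (\sum_(x <- xs) tanh x ^+ 2).

From HB Require Import structures.
From mathcomp Require Import all_boot all_order all_algebra.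
From mathcomp Require Import reals sequences exp.
From mathcomp Require Import boolp classical_sets functions ereal topology.
From mathcomp Require Import normedtype derive measure realfun measurable_realfun.
From mathcomp Require Import lebesgue_measure lebesgue_integral ftc.
From mathcomp Require Import exponential_distribution.
From mathcomp Require Import ring lra.
Import Order.TTheory GRing.Theory Num.Theory.
Import numFieldTopology.Exports.
Local Open Scope classical_set_scope.
Local Open Scope ring_scope.

(** With G_s(t) = (1 - exp(-s e^(-2t))) e^t one has, for s > 0,
   G_s(t) = sqrt s * G_1(t - (ln s)/2), so by translation invariance of
   Lebesgue measure  sqrt s = K^-1 \int_R G_s  with  0 < K = \int_R G_1 < +oo.
   Hence E[sqrt W] is a nondecreasing functional of u |-> E[1 - e^(-uW)] for
   W >= 0, and it suffices to compare Laplace transforms.  By independence,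
   E e^(-uV) = prod_i L_i(u) and E e^(-u Vbar) = ((1/n) sum_i L_i(u))^n, where
   L_i(u) = E e^(-u U_i^2); both are 1 at u = 0, and AM-GM gives
   E e^(-uV) <= E e^(-u Vbar). *)

Section sqrt_as_integral.
Context {R : realType}.
Local Notation mu := (@lebesgue_measure R).

Lemma ge0_integralT_shift (f : R -> R) (c : R) :
  continuous f -> (forall x, 0 <= f x) ->
  (\int[mu]_x (f (x + c))%:E = \int[mu]_x (f x)%:E)%E.
Proof.
move=> cf f0.
have dshift : derive1 (fun x : R => x + c) = cst 1.
  by apply/funext => x; rewrite derive1E deriveD // derive_id derive_cst addr0.
rewrite (@increasing_ge0_integration_by_substitutionT _ (fun x : R => x + c) f) //.
- by apply: eq_integral => x _; rewrite dshift /= mulr1.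
- by move=> x y; rewrite /= ltrD2r.
- by rewrite dshift; exact: cst_continuous.
- by rewrite dshift; apply: is_cvg_cst.
- by rewrite dshift; apply: is_cvg_cst.
- exact: cvg_addrr_Ny.
- exact: cvg_addrr.
Qed.

Lemma continuous_expRNnorm : continuous (fun x : R => expR (- `|x|)).
Proof.
move=> x; apply: continuous_comp; last exact: continuous_expR.
by apply: continuousN; exact: norm_continuous.
Qed.

Lemma integral_expRNnorm_le : (\int[mu]_x (expR (- `|x|))%:E <= 2%:E)%E.
Proof.
rewrite ge0_symfun_integralT; last 3 first.
- by move=> x; exact: expR_ge0.
- exact: continuous_expRNnorm.
- by move=> x /=; rewrite normrN.
rewrite -[leRHS]mule1 lee_pmul2l //.
have -> : (\int[mu]_(x in [set x : R | (0 <= x)%R]) (expR (- `|x|))%:E =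
    \int[mu]_(x in [set x : R | (0 <= x)%R]) (exponential_pdf 1 x)%:E)%E.
  apply: eq_integral => x; rewrite inE /= => x0.
  by rewrite exponential_pdfE // ger0_norm // mul1r mulN1r.
rewrite -(integral_exponential_pdf (@ltr01 R)).
apply: ge0_subset_integral => //.
- by rewrite -set_itvcy.
- by apply/measurable_EFinP; exact: measurable_exponential_pdf.
- by move=> x _; rewrite lee_fin exponential_pdf_ge0.
Qed.

Lemma onemexpRN_ge0 (x : R) : 0 <= x -> 0 <= 1 - expR (- x).
Proof. by move=> x0; rewrite subr_ge0 expR_le1 oppr_le0. Qed.

Lemma onemexpRN_le (x : R) : 1 - expR (- x) <= x.
Proof. by rewrite lerBlDr addrC -lerBlDr; have := expR_ge1Dx (- x); rewrite addrC. Qed.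

Lemma expR_half_ln (s : R) : 0 < s -> expR (ln s / 2) = Num.sqrt s.
Proof. by move=> s0; rewrite expRM lnK ?powR12_sqrt ?ltW. Qed.

Definition sqrt_kernel (s t : R) : R := (1 - expR (- (s * expR (- (2 * t))))) * expR t.

Lemma continuous_sqrt_kernel s : continuous (sqrt_kernel s).
Proof.
have cE (k : R) : continuous (fun t : R => expR (k * t)).
  move=> t; apply: (@continuous_comp _ _ _ (fun t => k * t)); last exact: continuous_expR.
  by apply: (@continuousM _ _ (cst k) id); [exact: cst_continuous | exact: cvg_id].
have -> : sqrt_kernel s = (cst 1 - expR \o (fun t => - (s * expR (- (2 * t))))) \* expR.
  by apply/funext.
move=> t; apply: continuousM; last exact: continuous_expR.
apply: continuousB; first exact: cst_continuous.
apply: continuous_comp; last exact: continuous_expR.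
apply: continuousN; apply: continuousM; first exact: cst_continuous.
rewrite (_ : (fun t => _) = (fun t => expR (-2 * t))); first exact: cE.
by apply/funext => u; rewrite mulNr.
Qed.

Lemma measurable_sqrt_kernel s : measurable_fun setT (sqrt_kernel s).
Proof. by apply: continuous_measurable_fun; exact: continuous_sqrt_kernel. Qed.

Lemma sqrt_kernel_ge0 s t : 0 <= s -> 0 <= sqrt_kernel s t.
Proof. by move=> s0; rewrite mulr_ge0 ?expR_ge0 ?onemexpRN_ge0 ?mulr_ge0 ?expR_ge0. Qed.

Lemma sqrt_kernel1_le t : sqrt_kernel 1 t <= expR (- `|t|).
Proof.
rewrite /sqrt_kernel mul1r; have [t0|t0] := leP 0 t.
  rewrite ger0_norm //; apply: le_trans (ler_wpM2r (expR_ge0 _) (onemexpRN_le _)) _.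
  by rewrite -expRD (_ : - (2 * t) + t = - t) //; ring.
rewrite ltr0_norm // opprK -[leRHS]mul1r; apply: ler_wpM2r; first exact: expR_ge0.
by rewrite lerBlDl lerDr expR_ge0.
Qed.

Lemma sqrt_kernelE s t : 0 < s ->
  sqrt_kernel s t = Num.sqrt s * sqrt_kernel 1 (t - ln s / 2).
Proof.
move=> s0; rewrite /sqrt_kernel mul1r.
have sqrt_s0 : Num.sqrt s != 0 by rewrite gt_eqF ?sqrtr_gt0.
have -> : expR (- (2 * (t - ln s / 2))) = s * expR (- (2 * t)).
  by rewrite (_ : - _ = ln s + - (2 * t)); [rewrite expRD lnK | field].
have -> : expR (t - ln s / 2) = expR t / Num.sqrt s.
  by rewrite expRD expRN expR_half_ln.
by field.
Qed.

Definition sqrt_kernel_mass : R := fine (\int[mu]_t (sqrt_kernel 1 t)%:E).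

Lemma sqrt_kernel_massE : (\int[mu]_t (sqrt_kernel 1 t)%:E = sqrt_kernel_mass%:E)%E.
Proof.
have int_ge0 : (0 <= \int[mu]_t (sqrt_kernel 1 t)%:E)%E.
  by apply: integral_ge0 => t _; rewrite lee_fin sqrt_kernel_ge0.
rewrite fineK // ge0_fin_numE //.
apply: le_lt_trans (le_lt_trans integral_expRNnorm_le (ltry _)).
apply: ge0_le_integral => //.
- by move=> t _; rewrite lee_fin sqrt_kernel_ge0.
- by apply/measurable_EFinP; exact: measurable_sqrt_kernel.
- by apply/measurable_EFinP; apply: continuous_measurable_fun; exact: continuous_expRNnorm.
- by move=> t _; rewrite lee_fin sqrt_kernel1_le.
Qed.

Lemma sqrt_kernel_mass_gt0 : 0 < sqrt_kernel_mass.
Proof.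
set c := 1 - expR (- expR (-2) : R).
have c_gt0 : 0 < c by rewrite subr_gt0 expR_lt1 oppr_lt0 expR_gt0.
have c_le t : 0 <= t <= 1 -> c <= sqrt_kernel 1 t.
  case/andP=> t0 t1; rewrite /sqrt_kernel mul1r -[leLHS]mulr1.
  apply: ler_pM; [exact: ltW | by [] | | by rewrite -expR0 ler_expR].
  by rewrite lerD2l lerN2 ler_expR lerN2 ler_expR; lra.
rewrite -lte_fin -sqrt_kernel_massE; apply: lt_le_trans (_ : c%:E <= _)%E.
  by rewrite lte_fin.
apply: (@le_trans _ _ (\int[mu]_(t in `[0%R, 1%R]) (sqrt_kernel 1 t)%:E)%E).
  have mu01 : mu `[0%R, 1%R] = 1%E.
    by rewrite lebesgue_measure_itv /= lte_fin ltr01 -EFinB subr0.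
  rewrite -[leLHS]mule1 -mu01 -integral_cst //; apply: ge0_le_integral => //.
  - by move=> t _; rewrite lee_fin ltW.
  - by apply: measurable_funTS; apply/measurable_EFinP; exact: measurable_sqrt_kernel.
apply: ge0_subset_integral => //.
- by apply/measurable_EFinP; exact: measurable_sqrt_kernel.
- by move=> t _; rewrite lee_fin sqrt_kernel_ge0.
Qed.

Lemma integral_sqrt_kernel s : 0 <= s ->
  (\int[mu]_t (sqrt_kernel s t)%:E = (Num.sqrt s * sqrt_kernel_mass)%:E)%E.
Proof.
rewrite le_eqVlt => /predU1P[<-|s0].
  rewrite sqrtr0 mul0r integral0_eq // => t _.
  by rewrite /sqrt_kernel mul0r oppr0 expR0 subrr mul0r.
under eq_integral do rewrite sqrt_kernelE // EFinM.
rewrite ge0_integralZl_EFin //; last 2 first.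
- by move=> t _; rewrite lee_fin sqrt_kernel_ge0.
- apply/measurable_EFinP; apply: continuous_measurable_fun => t.
  apply: (@continuous_comp _ _ _ (fun t => t - ln s / 2)); last exact: continuous_sqrt_kernel.
  by apply: continuousB; [exact: cvg_id | exact: cst_continuous].
rewrite (@ge0_integralT_shift _ (- (ln s / 2))).
- by rewrite sqrt_kernel_massE EFinM.
- exact: continuous_sqrt_kernel.
- by move=> t; exact: sqrt_kernel_ge0.
Qed.

Lemma measurable_sum_sqrt_kernel (m : fsmeasure R) :
  measurable_fun setT (fun t => \sum_(p <- m) p.2 * sqrt_kernel p.1 t).
Proof.
by apply: measurable_sum => p; apply: measurable_funM => //; exact: measurable_sqrt_kernel.
Qed.

Lemma sum_sqrt_kernel_ge0 (m : fsmeasure R) t :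
  all (fun p => (0 <= p.1) && (0 <= p.2)) m -> 0 <= \sum_(p <- m) p.2 * sqrt_kernel p.1 t.
Proof.
move=> m_ge0; rewrite big_seq sumr_ge0 // => p pm.
by have /andP[p1 p2] := allP m_ge0 p pm; rewrite mulr_ge0 ?sqrt_kernel_ge0.
Qed.

Lemma integral_sum_sqrt_kernel (m : fsmeasure R) :
  all (fun p => (0 <= p.1) && (0 <= p.2)) m ->
  (\int[mu]_t (\sum_(p <- m) p.2 * sqrt_kernel p.1 t)%:E =
   ((\sum_(p <- m) p.2 * Num.sqrt p.1) * sqrt_kernel_mass)%:E)%E.
Proof.
elim: m => [_|p m IH /= /andP[/andP[p1 p2] m_ge0]].
  by rewrite big_nil mul0r; apply: integral0_eq => t _; rewrite big_nil.
under eq_integral do rewrite big_cons EFinD EFinM.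
rewrite ge0_integralD //; first last.
- by apply/measurable_EFinP; exact: measurable_sum_sqrt_kernel.
- by move=> t _; rewrite lee_fin sum_sqrt_kernel_ge0.
- by apply: emeasurable_funM => //; apply/measurable_EFinP; exact: measurable_sqrt_kernel.
- by move=> t _; rewrite lee_fin mulr_ge0 ?sqrt_kernel_ge0.
rewrite ge0_integralZl_EFin //; last 2 first.
- by move=> t _; rewrite lee_fin sqrt_kernel_ge0.
- by apply/measurable_EFinP; exact: measurable_sqrt_kernel.
by rewrite integral_sqrt_kernel // IH // big_cons -EFinM -EFinD mulrDl mulrA.
Qed.

Lemma sum_sqrt_le_of_laplace (m1 m2 : fsmeasure R) :
  all (fun p => (0 <= p.1) && (0 <= p.2)) m1 ->
  all (fun p => (0 <= p.1) && (0 <= p.2)) m2 ->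
  (forall u, 0 < u -> \sum_(p <- m1) p.2 * (1 - expR (- (p.1 * u))) <=
                      \sum_(p <- m2) p.2 * (1 - expR (- (p.1 * u)))) ->
  \sum_(p <- m1) p.2 * Num.sqrt p.1 <= \sum_(p <- m2) p.2 * Num.sqrt p.1.
Proof.
move=> m1_ge0 m2_ge0 le_m12.
rewrite -(ler_pM2r sqrt_kernel_mass_gt0) -lee_fin -!integral_sum_sqrt_kernel //.
apply: ge0_le_integral => //.
- by move=> t _; rewrite lee_fin sum_sqrt_kernel_ge0.
- by apply/measurable_EFinP; exact: measurable_sum_sqrt_kernel.
- by apply/measurable_EFinP; exact: measurable_sum_sqrt_kernel.
move=> t _; rewrite lee_fin /sqrt_kernel.
under eq_bigr do rewrite mulrA; under [leRHS]eq_bigr do rewrite mulrA.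
by rewrite -!mulr_suml ler_wpM2r ?expR_ge0 ?le_m12 ?expR_gt0.
Qed.

End sqrt_as_integral.
Section sum_of_squares.
Context {R : realType}.
Implicit Types (mu : fsmeasure R) (mus : seq (fsmeasure R)).

Fixpoint sqsum_tanh_law mus : fsmeasure R :=
  if mus is mu :: mus' then
    [seq (tanh p.1 ^+ 2 + q.1, p.2 * q.2) | p <- mu, q <- sqsum_tanh_law mus']
  else [:: (0, 1)].

Lemma Eindep_sqsum_tanh mus (h : R -> R) :
  Eindep mus (fun xs => h (\sum_(x <- xs) tanh x ^+ 2)) =
  \sum_(q <- sqsum_tanh_law mus) q.2 * h q.1.
Proof.
elim: mus h => [|mu mus IH] h /=; first by rewrite big_seq1 big_nil mul1r.
rewrite big_allpairs_dep; apply: eq_bigr => p _.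
under [X in Eindep _ X]funext => xs do rewrite big_cons.
by rewrite (IH (fun v => h (_ + v))) mulr_sumr; apply: eq_bigr => q _; rewrite mulrA.
Qed.

Lemma sqsum_tanh_law_ge0 mus : all (fun mu => all (fun p => 0 <= p.2) mu) mus ->
  all (fun q => (0 <= q.1) && (0 <= q.2)) (sqsum_tanh_law mus).
Proof.
elim: mus => [|mu mus IH] /=; first by rewrite lexx ler01.
case/andP=> /allP mu_ge0 /IH /allP law_ge0; apply/allP => _ /allpairsP[[p q] /= [pmu qlaw ->]] /=.
have /andP[q1 q2] := law_ge0 q qlaw.
by rewrite addr_ge0 ?sqr_ge0 // mulr_ge0 // mu_ge0.
Qed.

Definition laplace_tanh2 mu (u : R) : R :=
  \sum_(p <- mu) p.2 * expR (- (tanh p.1 ^+ 2 * u)).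

Lemma sqsum_tanh_law_laplace mus u :
  \sum_(q <- sqsum_tanh_law mus) q.2 * expR (- (q.1 * u)) =
  \prod_(mu <- mus) laplace_tanh2 mu u.
Proof.
elim: mus => [|mu mus IH] /=; first by rewrite big_seq1 big_nil mul0r oppr0 expR0 mulr1.
rewrite big_allpairs_dep big_cons /laplace_tanh2 -IH big_distrl /=.
apply: eq_bigr => p _; rewrite mulr_sumr; apply: eq_bigr => q _ /=.
by rewrite mulrDl opprD expRD; ring.
Qed.

Lemma sqsum_tanh_law_onem_laplace mus u :
  \sum_(q <- sqsum_tanh_law mus) q.2 * (1 - expR (- (q.1 * u))) =
  \prod_(mu <- mus) laplace_tanh2 mu 0 - \prod_(mu <- mus) laplace_tanh2 mu u.
Proof.
rewrite -!sqsum_tanh_law_laplace -sumrB; apply: eq_bigr => q _.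
by rewrite mulr0 oppr0 expR0 mulrBr mulr1.
Qed.

Lemma laplace_tanh2_mixture n (M : seq (fsmeasure R)) u :
  laplace_tanh2 (mixture n M) u = (\sum_(mu <- M) laplace_tanh2 mu u) / n%:R.
Proof.
rewrite /laplace_tanh2 /mixture big_map big_flatten /= mulr_suml.
by apply: eq_bigr => mu _; rewrite mulr_suml; apply: eq_bigr => p _; rewrite mulrAC.
Qed.

Lemma laplace_tanh2_at0 mu : laplace_tanh2 mu 0 = \sum_(p <- mu) p.2.
Proof. by apply: eq_bigr => p _; rewrite mulr0 oppr0 expR0 mulr1. Qed.

Lemma laplace_tanh2_ge0 mu u : all (fun p => 0 <= p.2) mu -> 0 <= laplace_tanh2 mu u.
Proof.
move=> /allP mu_ge0; rewrite /laplace_tanh2 big_seq sumr_ge0 // => p pmu.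
by rewrite mulr_ge0 ?expR_ge0 ?mu_ge0.
Qed.

Definition fsprob (mu : fsmeasure R) : Prop :=
  all (fun p => 0 <= p.2) mu /\ \sum_(p <- mu) p.2 = 1.

Lemma mixture_ge0 n (M : seq (fsmeasure R)) :
  (forall mu, mu \in M -> fsprob mu) -> all (fun p => 0 <= p.2) (mixture n M).
Proof.
move=> M_prob; apply/allP => _ /mapP[p /flattenP[mu muM pmu] ->] /=.
by have [/allP mu_ge0 _] := M_prob mu muM; rewrite divr_ge0 ?mu_ge0.
Qed.

Lemma prod_le_mean_expn (s : seq R) : all (fun x => 0 <= x) s ->
  \prod_(x <- s) x <= ((\sum_(x <- s) x) / (size s)%:R) ^+ size s.
Proof.
move=> /allP s_ge0; rewrite (big_nth 0) [in X in _ <= X](big_nth 0) !big_mkord.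
have := @leif_AGM R _ predT (fun i : 'I_(size s) => s`_i).
by rewrite card_ord => /(_ (fun i _ => s_ge0 _ (mem_nth 0 (ltn_ord i)))) [].
Qed.

Theorem Eindep_sqrt_sum_tanh2_mixture_le (M : seq (fsmeasure R)) :
  (forall mu, mu \in M -> fsprob mu) ->
  Eindep (nseq (size M) (mixture (size M) M)) sqrt_sum_tanh2 <= Eindep M sqrt_sum_tanh2.
Proof.
move=> M_prob; rewrite /sqrt_sum_tanh2 !Eindep_sqsum_tanh; apply: sum_sqrt_le_of_laplace.
- by apply: sqsum_tanh_law_ge0; apply/allP => _ /nseqP[-> _]; exact: mixture_ge0.
- by apply: sqsum_tanh_law_ge0; apply/allP => mu /M_prob[].
move=> u _; rewrite !sqsum_tanh_law_onem_laplace !big_nseq !iter_mulr_1.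
have L0 : \prod_(mu <- M) laplace_tanh2 mu 0 = 1.
  by rewrite big_seq big1 // => mu /M_prob[_]; rewrite laplace_tanh2_at0.
have Lmix0 : laplace_tanh2 (mixture (size M) M) 0 ^+ size M = 1.
  rewrite laplace_tanh2_mixture big_seq (eq_bigr (fun _ => 1)) -?big_seq; last first.
    by move=> mu /M_prob[_]; rewrite laplace_tanh2_at0.
  rewrite big_const_seq count_predT iter_addr_0.
  by case: (size M) => [|k]; rewrite ?expr0 // divff ?expr1n ?pnatr_eq0.
rewrite L0 Lmix0 lerD2l lerN2 laplace_tanh2_mixture.
have := prod_le_mean_expn [seq laplace_tanh2 mu u | mu <- M].
rewrite big_map size_map big_map; apply; rewrite all_map; apply/allP => mu /M_prob[mu_ge0 _].
exact: laplace_tanh2_ge0.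
Qed.

Lemma cosh_ge0 (x : R) : 0 <= cosh x.
Proof. by rewrite /cosh divr_ge0 ?addr_ge0 ?expR_ge0. Qed.

Lemma coshM_prob (eta : fsmeasure R) : admissible eta -> fsprob (coshM eta).
Proof.
case=> /allP eta_ge0 exp_mass expN_mass; split.
  by apply/allP => _ /mapP[p peta ->]; rewrite mulr_ge0 ?cosh_ge0 ?eta_ge0.
rewrite big_map; under eq_bigr do rewrite /= /cosh mulrA mulrDr.
by rewrite -mulr_suml big_split /= exp_mass expN_mass; field.
Qed.

End sum_of_squares.

Theorem lemma5 (R : realType) (n : nat) (eta : 'I_n -> fsmeasure R)
  (hadm : forall i, admissible (eta i)) :
  let M := [seq coshM (eta i) | i <- enum 'I_n] in
  Eindep (nseq n (mixture n M)) sqrt_sum_tanh2 <= Eindep M sqrt_sum_tanh2.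
Proof.
cbv zeta; set M := [seq coshM (eta i) | i <- enum 'I_n].
have -> : n = size M by rewrite size_map size_enum_ord.
by apply: Eindep_sqrt_sum_tanh2_mixture_le => _ /mapP[i _ ->]; exact: coshM_prob.
Qed.
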